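(* For any time warp $f$ and $m\in\omega^+$, $f^\star(m)=\bigwedge\{p(n)\mid n\in\omega^+\text{ and } m\le f(n)\}$ (where the meet of the empty set is $\omega$).
   Context: Let $\omega^+=\omega\cup\{\omega\}$ with its natural order. A time warp is a join-preserving map $f\colon\omega^+\to\omega^+$ (equivalently order-preserving with $f(0)=0$ and $f(\omega)=\bigvee_{n\in\omega}f(n)$); time warps are ordered pointwise. $p$ is the time warp $p(m)=\bigvee\{k\in\omega\mid k<m\}$ (so $p(0)=0$, $p(\omega)=\omega$, $p(m)=m-1$ otherwise), and $f^\star$ is the largest time warp $h$ with $f\circ h\le p$. *)

(* omega^+ = omega ∪ {omega}, modelled as finite naturals plus a top element. *)
From Stdlib Require Import Arith.

Inductive wplus : Type :=
  | Fin : nat -> wplus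
  | Om  : wplus.

Definition wle (x y : wplus) : Prop :=
  match x, y with
  | Fin a, Fin b => a <= b
  | _, Om => True
  | Om, Fin _ => False
  end.

Definition is_lub (S : wplus -> Prop) (x : wplus) : Prop :=
  (forall y, S y -> wle y x) /\ (forall z, (forall y, S y -> wle y z) -> wle x z).

Definition is_glb (S : wplus -> Prop) (x : wplus) : Prop :=
  (forall y, S y -> wle x y) /\ (forall z, (forall y, S y -> wle z y) -> wle z x).

Definition time_warp (f : wplus -> wplus) : Prop :=
  forall (S : wplus -> Prop) (x : wplus),
    is_lub S x -> is_lub (fun y => exists z, S z /\ y = f z) (f x).

Definition p (m : wplus) : wplus :=
  match m with
  | Fin n => Fin (n - 1)
  | Om => Om
  end.

Definition is_star (f g : wplus -> wplus) : Prop :=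
  time_warp g /\ (forall m, wle (f (g m)) (p m)) /\
  (forall h, time_warp h -> (forall m, wle (f (h m)) (p m)) -> forall m, wle (h m) (g m)).

(* f^* is obtained as the right adjoint of f, shifted by p: for every successor
   m = k + 1 and every x one has x <= f^*(m) iff f(x) <= k, so f^*(m) is the
   largest x with f(x) <= p(m), which is the meet of the p(n) with m <= f(n).
   At m = 0 and m = omega the value of any time warp is forced by strictness
   and continuity, and the meet itself is strict and continuous (continuity
   at omega because f(N + 1) = omega as soon as every f^*(k) <= N).  Maximality makes f^* unique, so every f^*
   is this meet. *)

From Stdlib Require Import Arith Lia Wf_nat Classical ClassicalEpsilon.

Lemma wle_refl x : wle x x.
Proof. destruct x; simpl; auto. Qed.

Lemma wle_trans x y z : wle x y -> wle y z -> wle x z.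
Proof. destruct x, y, z; simpl; intros; auto; try lia; contradiction. Qed.

Lemma wle_antisym x y : wle x y -> wle y x -> x = y.
Proof. destruct x, y; simpl; intros; auto; try contradiction. f_equal; lia. Qed.

Lemma Fin0_wle x : wle (Fin 0) x.
Proof. destruct x; simpl; auto; lia. Qed.

Lemma wle_Om x : wle x Om.
Proof. destruct x; exact I. Qed.

Lemma wle_Fin_or_Fin_succ x k : wle x (Fin k) \/ wle (Fin (S k)) x.
Proof. destruct x as [j|]; simpl; auto; lia. Qed.

Lemma not_wle_p n x : ~ wle n x -> wle x (p n).
Proof. destruct n as [k|], x as [j|]; simpl; intros H; auto; lia. Qed.

Lemma p_Fin_succ k : p (Fin (S k)) = Fin k.
Proof. simpl; rewrite Nat.sub_0_r; reflexivity. Qed.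

Record is_warp (h : wplus -> wplus) : Prop := {
  warp_mono : forall x y, wle x y -> wle (h x) (h y);
  warp_Fin0 : h (Fin 0) = Fin 0;
  warp_Om_lub : forall z, (forall k, wle (h (Fin k)) z) -> wle (h Om) z }.

Lemma is_lub_pair x y : wle x y -> is_lub (fun z => z = x \/ z = y) y.
Proof.
  intros Hxy; split.
  - intros z [-> | ->]; [exact Hxy | apply wle_refl].
  - intros z Hz; apply Hz; right; reflexivity.
Qed.

Lemma is_lub_empty : is_lub (fun _ => False) (Fin 0).
Proof. split; [intros _ [] | intros z _; apply Fin0_wle]. Qed.

Lemma is_lub_Fin : is_lub (fun z => exists k, z = Fin k) Om.
Proof.
  split; [intros z _; apply wle_Om|].
  intros [n|] Hz; [|exact I].
  specialize (Hz (Fin (S n)) (ex_intro _ _ eq_refl)); simpl in Hz; lia.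
Qed.

Lemma is_lub_Fin_attained A k : is_lub A (Fin k) -> k = 0 \/ A (Fin k).
Proof.
  intros [Hub Hleast]; destruct k as [|k]; [left; reflexivity | right].
  apply NNPP; intros HA.
  assert (H : wle (Fin (S k)) (Fin k)).
  { apply Hleast; intros [j|] Hj; specialize (Hub _ Hj); simpl in *; [|contradiction].
    assert (j <> S k) by (intros ->; contradiction). lia. }
  simpl in H; lia.
Qed.

Lemma is_lub_Om_cofinal A :
  is_lub A Om -> A Om \/ forall j, exists i, j <= i /\ A (Fin i).
Proof.
  intros [_ Hleast]; apply NNPP; intros H.
  apply not_or_and in H as [HOm Hj]; apply not_all_ex_not in Hj as [j Hj].
  apply (Hleast (Fin j)); intros [i|] Hi; [simpl | contradiction].
  destruct (le_lt_dec j i); [exfalso; eauto | lia].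
Qed.

Lemma time_warp_iff_is_warp h : time_warp h <-> is_warp h.
Proof.
  split.
  - intros Hh; split.
    + intros x y Hxy. apply (proj1 (Hh _ _ (is_lub_pair x y Hxy))).
      exists x; split; [left|]; reflexivity.
    + apply wle_antisym; [|apply Fin0_wle].
      apply (proj2 (Hh _ _ is_lub_empty)); intros y [z [[] _]].
    + intros z Hz. apply (proj2 (Hh _ _ is_lub_Fin)).
      intros y [x [[k ->] ->]]; apply Hz.
  - intros [Hmono H0 HOm] A x Hx; split.
    + intros y [z [Hz ->]]; apply Hmono, (proj1 Hx), Hz.
    + intros z Hz.
      assert (Himg : forall y, A y -> wle (h y) z) by (intros y Hy; apply Hz; eauto).
      destruct x as [k|].
      * destruct (is_lub_Fin_attained A k Hx) as [-> | HA]; auto.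
        rewrite H0; apply Fin0_wle.
      * destruct (is_lub_Om_cofinal A Hx) as [HA | Hcof]; auto.
        apply HOm; intros j; destruct (Hcof j) as [i [Hji Hi]].
        apply wle_trans with (h (Fin i)); [apply Hmono; exact Hji | auto].
Qed.

Lemma glb_exists (S : wplus -> Prop) : exists x, is_glb S x.
Proof.
  destruct (classic (exists k, S (Fin k))) as [HS | HS].
  - destruct (dec_inh_nat_subset_has_unique_least_element
                (fun k => S (Fin k)) (fun k => classic _) HS) as [k [[Sk Hk] _]].
    exists (Fin k); split.
    + intros [j|] Sj; simpl; auto.
    + intros z Hz; apply Hz, Sk.
  - exists Om; split.
    + intros [j|] Sj; simpl; eauto.
    + intros z _; apply wle_Om.
Qed.

Lemma is_star_unique f g g' : is_star f g -> is_star f g' -> forall m, g m = g' m.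
Proof.
  intros [Hg [Hfg Hgmax]] [Hg' [Hfg' Hg'max]] m.
  apply wle_antisym; [apply Hg'max | apply Hgmax]; assumption.
Qed.

Section Star.

Variable f : wplus -> wplus.

Definition star (m : wplus) : wplus :=
  epsilon (inhabits Om) (is_glb (fun y => exists n, wle m (f n) /\ y = p n)).

Lemma star_glb m : is_glb (fun y => exists n, wle m (f n) /\ y = p n) (star m).
Proof. unfold star; apply epsilon_spec, glb_exists. Qed.

Lemma wle_star x m : wle x (star m) <-> forall n, wle m (f n) -> wle x (p n).
Proof.
  destruct (star_glb m) as [Hlb Hgreatest]; split.
  - intros Hx n Hn; apply wle_trans with (star m); [exact Hx | apply Hlb; eauto].
  - intros H; apply Hgreatest; intros y [n [Hn ->]]; auto.
Qed.

Lemma star_le_p m n : wle m (f n) -> wle (star m) (p n).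
Proof. apply wle_star, wle_refl. Qed.

Lemma star_mono x y : wle x y -> wle (star x) (star y).
Proof.
  intros Hxy; apply wle_star; intros n Hn.
  apply star_le_p, wle_trans with y; assumption.
Qed.

Lemma star_Fin0 : star (Fin 0) = Fin 0.
Proof. apply wle_antisym; [apply (star_le_p (Fin 0) (Fin 0)) | ]; apply Fin0_wle. Qed.

Hypothesis f_warp : is_warp f.

Lemma wle_star_succ x k : wle x (star (Fin (S k))) <-> wle (f x) (Fin k).
Proof.
  rewrite wle_star; split.
  - intros H; destruct x as [[|j]|].
    + rewrite (warp_Fin0 f f_warp); apply Fin0_wle.
    + destruct (wle_Fin_or_Fin_succ (f (Fin (S j))) k) as [Hle | Hgt]; [exact Hle|].
      specialize (H _ Hgt); simpl in H; lia.
    + apply (warp_Om_lub f f_warp); intros j.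
      destruct (wle_Fin_or_Fin_succ (f (Fin j)) k) as [Hle | Hgt]; [exact Hle|].
      destruct (H _ Hgt).
  - intros Hx n Hn; apply not_wle_p; intros Hnx.
    pose proof (wle_trans _ _ _ Hn (wle_trans _ _ _ (warp_mono f f_warp _ _ Hnx) Hx)).
    simpl in *; lia.
Qed.

Lemma star_Om_lub z : (forall k, wle (star (Fin k)) z) -> wle (star Om) z.
Proof.
  intros Hz; destruct z as [N|]; [|apply wle_Om].
  assert (HN : f (Fin (S N)) = Om).
  { destruct (f (Fin (S N))) as [M|] eqn:E; [exfalso | reflexivity].
    assert (H : wle (Fin (S N)) (star (Fin (S M))))
      by (apply wle_star_succ; rewrite E; apply wle_refl).
    pose proof (wle_trans _ _ _ H (Hz _)); simpl in *; lia. }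
  rewrite <- p_Fin_succ; apply star_le_p; rewrite HN; exact I.
Qed.

Lemma star_is_warp : is_warp star.
Proof. split; [exact star_mono | exact star_Fin0 | exact star_Om_lub]. Qed.

Lemma f_star_le_p m : wle (f (star m)) (p m).
Proof.
  destruct m as [[|k]|].
  - rewrite star_Fin0, (warp_Fin0 f f_warp); apply wle_refl.
  - rewrite p_Fin_succ; apply wle_star_succ, wle_refl.
  - apply wle_Om.
Qed.

Lemma star_greatest h :
  is_warp h -> (forall m, wle (f (h m)) (p m)) -> forall m, wle (h m) (star m).
Proof.
  intros Hh Hfh.
  assert (Hfin : forall k, wle (h (Fin k)) (star (Fin k))).
  { intros [|k].
    - rewrite (warp_Fin0 h Hh); apply Fin0_wle.
    - apply wle_star_succ; rewrite <- (p_Fin_succ k); exact (Hfh (Fin (S k))). }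
  intros [k|]; [apply Hfin|].
  apply (warp_Om_lub h Hh); intros k.
  apply wle_trans with (star (Fin k)); [apply Hfin | apply star_mono, wle_Om].
Qed.

Lemma star_is_star : is_star f star.
Proof.
  split; [apply time_warp_iff_is_warp, star_is_warp | split; [exact f_star_le_p|]].
  intros h Hh; apply star_greatest, time_warp_iff_is_warp, Hh.
Qed.

End Star.

Theorem lemma2p3 (f : wplus -> wplus) (hf : time_warp f) :
  (exists g, is_star f g) /\
  (forall g, is_star f g ->
     forall m : wplus,
       is_glb (fun y => exists n : wplus, wle m (f n) /\ y = p n) (g m)).
Proof.
  apply time_warp_iff_is_warp in hf.
  split; [exists (star f); exact (star_is_star f hf)|].
  intros g Hg m.
  rewrite (is_star_unique f g (star f) Hg (star_is_star f hf) m).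
  apply star_glb.
Qed.
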